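(* Let $m\ge2$, let $\eta$ be a primitive $m$-th root of unity, and let $F(x,y)=(x+y)^m$. Consider real polynomials $G(x,y)$ such that $G(\eta x,\eta y)=G(x,y)$, $G=1$ on the line $x+y=1$, $G$ has only non-negative coefficients, $G(0,0)=0$, and such that the polynomial $H=(G-F)/(F-1)$ (so that $G=F-H+HF$) has only non-negative coefficients. For such $G$, the number of terms $N(G)$ is either $m+1$ or at least $2m+1$; that is, $N(G)$ lies neither in $\{1,\dots,m\}$ nor in $\{m+2,\dots,2m\}$. Conversely, $m+1$ and every integer $N\ge 2m+1$ occur as $N(G)$ for some such $G$.
   Context: $N(q)$ denotes the number of distinct monomials with nonzero coefficient in $q$. For $G$ as described, $G-F$ is divisible by $F-1$, so $H$ is a polynomial. *)

From HB Require Import structures.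
From mathcomp Require Import all_boot all_order all_algebra.
From mathcomp Require Import mpoly.
From mathcomp Require Import complex.
Set Implicit Arguments. Unset Strict Implicit. Unset Printing Implicit Defensive.
Import Order.TTheory GRing.Theory Num.Theory.
Local Open Scope ring_scope.

(* F(x,y) = (x+y)^m as a bivariate polynomial; 'X_0 = x, 'X_1 = y. *)
Definition Fpoly (R : rcfType) (m : nat) : {mpoly R[2]} :=
  ('X_0 + 'X_1) ^+ m.

Definition Nterms (R : rcfType) (q : {mpoly R[2]}) : nat := size (msupp q).

Definition ev2 (S : comRingType) (q : {mpoly S[2]}) (x y : S) : S :=
  q.@[[ffun i : 'I_2 => if val i == 0%N then x else y]].

Definition admissible (R : rcfType) (m : nat) (eta : R[i]) (G : {mpoly R[2]}) :
  Prop :=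
  let GC := map_mpoly (real_complex R) G in
  [/\ (forall x y : R[i], ev2 GC (eta * x) (eta * y) = ev2 GC x y),
      (forall x y : R, x + y = 1 -> ev2 G x y = 1),
      (forall mo, 0 <= G@_mo),
      ev2 G 0 0 = 0 &
      exists H : {mpoly R[2]},
        G = Fpoly R m - H + H * Fpoly R m /\ (forall mo, 0 <= H@_mo)].

From HB Require Import structures.
From mathcomp Require Import all_boot all_order all_algebra.
From mathcomp Require Import mpoly.
From mathcomp Require Import complex.
From mathcomp Require Import ring lra zify.
Import Order.TTheory GRing.Theory Num.Theory.
Set Implicit Arguments. Unset Strict Implicit. Unset Printing Implicit Defensive.
Local Open Scope ring_scope.

(* If G = F - H + H F with H != 0, evaluating at the origin shows that H has no
   constant term.  Then G + H = (1 + H) F, and since all coefficients are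
   nonnegative there is no cancellation: the support of (1 + H) F contains
   t x^(m-i) y^i for every monomial t of 1 + H and every i <= m.  With s the
   leading monomial of 1 + H for the graded lexicographic order (s != 1), the
   monomials y^m t, x^(m-i) y^i and x^(m-i) y^i s (i < m) are pairwise distinct,
   whence N(G) + N(H) >= N(H) + 1 + 2m.
   Conversely, with B_r = x^(m-r) (x+y)^r and r < m, the polynomial
   F - B_r + B_r F is admissible with 2m + r + 1 terms (two homogeneous parts),
   and G |-> F - x^m + x^m G preserves admissibility (H becomes x^m (1 + H))
   while adding m terms, all of x-degree below m.  H = 0 gives F itself. *)

Section NonnegCoefficients.
Variables (R : numDomainType) (n : nat).
Implicit Types (p q : {mpoly R[n]}) (u : 'X_{1..n}).

Definition coefs_ge0 p := forall u, 0 <= p@_u.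

Lemma coefs_ge0D p q : coefs_ge0 p -> coefs_ge0 q -> coefs_ge0 (p + q).
Proof. by move=> hp hq u; rewrite mcoeffD addr_ge0. Qed.

Lemma coefs_ge0M p q : coefs_ge0 p -> coefs_ge0 q -> coefs_ge0 (p * q).
Proof. by move=> hp hq u; rewrite mcoeffM sumr_ge0 // => k _; rewrite mulr_ge0. Qed.

Lemma coefs_ge0X u : coefs_ge0 'X_[u].
Proof. by move=> v; rewrite mcoeffX ler0n. Qed.

Lemma coefs_ge0_msupp p u : coefs_ge0 p -> (u \in msupp p) = (0 < p@_u).
Proof. by move=> hp; rewrite mcoeff_msupp lt_def hp andbT. Qed.

Lemma msuppM_ge0 p q t u : coefs_ge0 p -> coefs_ge0 q ->
  t \in msupp p -> u \in msupp q -> (u + t)%MM \in msupp (p * q).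
Proof.
move=> hp hq; rewrite (coefs_ge0_msupp _ hp) (coefs_ge0_msupp _ hq).
rewrite (coefs_ge0_msupp _ (coefs_ge0M hp hq)) => pt qu.
rewrite [q]mpolyE mulr_sumr raddf_sum /= (bigD1_seq u) ?msupp_uniq //=; last first.
  by rewrite (coefs_ge0_msupp _ hq).
rewrite -scalerAr mcoeffZ mcoeffMX ltr_wpDr ?mulr_gt0 // sumr_ge0 // => v _.
by rewrite -scalerAr mcoeffZ mulr_ge0 // (coefs_ge0M hp (coefs_ge0X _)).
Qed.

End NonnegCoefficients.

Lemma Nterms_addE (R : rcfType) (p q : {mpoly R[2]}) :
  {in msupp p, forall u, u \notin msupp q} ->
  Nterms (p + q) = (Nterms p + Nterms q)%N.
Proof.
move=> disj; rewrite /Nterms -size_cat; apply/perm_size/msuppD => u /=.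
by apply/negbTE/andP => -[/disj/negP].
Qed.

Lemma Nterms_addr_le (R : rcfType) (p q : {mpoly R[2]}) :
  (Nterms (p + q) <= Nterms p + Nterms q)%N.
Proof. by rewrite /Nterms -size_cat uniq_leq_size ?msupp_uniq //; apply: msuppD_le. Qed.

Lemma Nterms_mulX (R : rcfType) (p : {mpoly R[2]}) (u : 'X_{1..2}) :
  Nterms (p * 'X_[u]) = Nterms p.
Proof. by rewrite /Nterms (perm_size (msuppMX _ _)) size_map. Qed.

Definition mon (a b : nat) : 'X_{1..2} := (U_(ord0) *+ a + U_(ord_max) *+ b)%MM.

Lemma monE0 a b : mon a b ord0 = a.
Proof. by rewrite mnmDE !mulmnE !mnm1E /= mul1n mul0n addn0. Qed.

Lemma monE1 a b : mon a b ord_max = b.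
Proof. by rewrite mnmDE !mulmnE !mnm1E /= mul1n mul0n. Qed.

Lemma mdeg_mon a b : mdeg (mon a b) = (a + b)%N.
Proof. by rewrite mdegD !mdegMn !mdeg1 !mul1n. Qed.

Lemma mpolyX_mon (R : nzRingType) a b :
  'X_[mon a b] = 'X_0 ^+ a * 'X_1 ^+ b :> {mpoly R[2]}.
Proof. by rewrite mpolyXD !mpolyXn. Qed.

Section BinaryForms.
Variable R : nzRingType.
Implicit Types (a : nat) (c d : nat -> R).

Definition bform a c : {mpoly R[2]} := \sum_(i < a.+1) c i *: 'X_[mon (a - i) i].

Lemma msupp_bform a c :
  perm_eq (msupp (bform a c)) [seq mon (a - i) i | i <- iota 0 a.+1 & c i != 0].
Proof.
set S := [seq mon (a - i) i | i <- iota 0 a.+1 & c i != 0].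
have -> : bform a c = \sum_(u <- S) c (u ord_max) *: 'X_[u].
  rewrite big_map big_filter /bform.
  rewrite -(big_mkord xpredT (fun i => c i *: 'X_[mon (a - i) i])).
  rewrite /index_iota subn0 (bigID (fun i => c i != 0)) /= [X in _ + X]big1 ?addr0.
    by apply: eq_bigr => i _; rewrite monE1.
  by move=> i /negbNE/eqP ->; rewrite scale0r.
apply: msupp_sumX.
  rewrite map_inj_uniq ?filter_uniq ?iota_uniq // => i j.
  by move/(congr1 (fun u : 'X_{1..2} => u ord_max)); rewrite !monE1.
by move=> u; case/mapP => i; rewrite mem_filter => /andP [? _] ->; rewrite monE1.
Qed.

Lemma bform_homog k c : bform k c \is k.-homog.
Proof.
apply: rpred_sum => i _; apply: rpredZ; rewrite dhomogX /= mdeg_mon.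
by rewrite subnK // -ltnS.
Qed.

Lemma bformB a c d : bform a c - bform a d = bform a (fun i => c i - d i).
Proof. by rewrite -sumrB; apply: eq_bigr => i _; rewrite scalerBl. Qed.

End BinaryForms.

Lemma bform_binom (R : comNzRingType) a n : (n <= a)%N ->
  'X_0 ^+ (a - n) * ('X_0 + 'X_1) ^+ n = bform a (fun i => ('C(n, i))%:R : R).
Proof.
move=> le_na; rewrite exprDn mulr_sumr /bform.
pose F i := ('C(n, i))%:R *: ('X_[mon (a - i) i] : {mpoly R[2]}).
transitivity (\sum_(i < n.+1) F i).
  apply: eq_bigr => i _; rewrite /F mpolyX_mon mulrnAr -scaler_nat mulrA -exprD.
  by congr (_ *: (_ ^+ _ * _)); have := ltn_ord i; lia.
rewrite (big_ord_widen a.+1 F) ?ltnS // big_mkcond; apply: eq_bigr => i _.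
by case: ifPn => //; rewrite ltnS -ltnNge /F => /bin_small ->; rewrite scale0r.
Qed.

Lemma coefs_ge0_bform (R : numDomainType) a (c : nat -> R) :
  (forall i, 0 <= c i) -> coefs_ge0 (bform a c).
Proof.
move=> hc u; rewrite /bform raddf_sum sumr_ge0 // => i _ /=.
by rewrite mcoeffZ mcoeffX mulr_ge0.
Qed.

Lemma Nterms_bform (R : rcfType) a (c : nat -> R) :
  Nterms (bform a c) = count (fun i => c i != 0) (iota 0 a.+1).
Proof. by rewrite /Nterms (perm_size (msupp_bform _ _)) size_map size_filter. Qed.

Lemma Nterms_binom (R : rcfType) k : Nterms (('X_0 + 'X_1) ^+ k : {mpoly R[2]}) = k.+1.
Proof.
have := bform_binom R (leqnn k); rewrite subnn expr0 mul1r => ->.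
rewrite Nterms_bform (eq_in_count (a2 := predT)) ?count_predT ?size_iota // => i.
by rewrite mem_iota pnatr_eq0 -lt0n bin_gt0.
Qed.

Lemma ltn_bin2l r n i : (r < n)%N -> (0 < i <= n)%N -> ('C(r, i) < 'C(n, i))%N.
Proof.
case: n i => [|n] [|i] //; rewrite !ltnS => le_rn le_in.
have := leq_bin2l i.+1 le_rn; have : (0 < 'C(n, i))%N by rewrite bin_gt0.
by rewrite binS; lia.
Qed.

Section BinomialForm.
Variables (R : rcfType) (m : nat).
Local Notation F := (Fpoly R m).

Definition Bpoly r : {mpoly R[2]} := 'X_0 ^+ (m - r) * ('X_0 + 'X_1) ^+ r.

Lemma Bpoly0 : Bpoly 0 = 'X_0 ^+ m.
Proof. by rewrite /Bpoly subn0 expr0 mulr1. Qed.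

Lemma Bpoly_bform r : (r <= m)%N -> Bpoly r = bform m (fun i => ('C(r, i))%:R).
Proof. exact: bform_binom. Qed.

Lemma Fpoly_bform : F = bform m (fun i => ('C(m, i))%:R).
Proof. by rewrite -Bpoly_bform // /Bpoly subnn expr0 mul1r. Qed.

Lemma Fpoly_homog : F \is m.-homog.
Proof. by rewrite Fpoly_bform bform_homog. Qed.

Lemma Bpoly_homog r : (r <= m)%N -> Bpoly r \is m.-homog.
Proof. by move=> le_rm; rewrite Bpoly_bform // bform_homog. Qed.

Lemma coefs_ge0F : coefs_ge0 F.
Proof. by rewrite Fpoly_bform; apply: coefs_ge0_bform => i; rewrite ler0n. Qed.

Lemma coefs_ge0B r : (r <= m)%N -> coefs_ge0 (Bpoly r).
Proof.
by move=> le_rm; rewrite Bpoly_bform //; apply: coefs_ge0_bform => i; rewrite ler0n.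
Qed.

Lemma mem_msupp_Fpoly i : (i <= m)%N -> mon (m - i) i \in msupp F.
Proof.
move=> le_im; rewrite Fpoly_bform (perm_mem (msupp_bform _ _)).
apply: (map_f (fun j => mon (m - j) j)).
by rewrite mem_filter mem_iota pnatr_eq0 -lt0n bin_gt0 le_im.
Qed.

Lemma subF_Bpoly r : (r <= m)%N ->
  F - Bpoly r = bform m (fun i => ('C(m, i))%:R - ('C(r, i))%:R).
Proof. by move=> le_rm; rewrite Fpoly_bform Bpoly_bform // bformB. Qed.

Lemma coefs_ge0_subF_Bpoly r : (r <= m)%N -> coefs_ge0 (F - Bpoly r).
Proof.
move=> le_rm; rewrite subF_Bpoly //; apply: coefs_ge0_bform => i.
by rewrite subr_ge0 ler_nat leq_bin2l.
Qed.

Lemma Nterms_subF_Bpoly r : (r < m)%N -> Nterms (F - Bpoly r) = m.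
Proof.
move=> lt_rm; rewrite subF_Bpoly 1?ltnW // Nterms_bform /= !bin0 subrr eqxx add0n.
rewrite (eq_in_count (a2 := predT)) ?count_predT ?size_iota // => i.
rewrite mem_iota subr_eq0 eqr_nat => range_i.
by rewrite gtn_eqF // ltn_bin2l //; lia.
Qed.

Lemma msupp_subF_Xn u : u \in msupp (F - 'X_0 ^+ m) -> (u ord0 < m)%N.
Proof.
rewrite -Bpoly0 subF_Bpoly // (perm_mem (msupp_bform _ _)).
case/mapP => i; rewrite mem_filter mem_iota => /and3P [nz _ lt_im] ->.
rewrite monE0; case: i nz lt_im => [|i _]; first by rewrite !bin0 subrr eqxx.
lia.
Qed.

End BinomialForm.

Section TermCounts.
Variables (R : rcfType) (m : nat).
Hypothesis m_gt0 : (0 < m)%N.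
Local Notation F := (Fpoly R m).
Local Notation B := (Bpoly R m).

Definition seed r := F - B r + B r * F.

Definition grow (G : {mpoly R[2]}) := F - 'X_0 ^+ m + 'X_0 ^+ m * G.

Lemma Nterms_seed r : (r < m)%N -> Nterms (seed r) = (m + (r + m).+1)%N.
Proof.
move=> lt_rm; have le_rm := ltnW lt_rm.
have homFB : F - B r \is m.-homog by rewrite subF_Bpoly // bform_homog.
have homBF : B r * F \is (m + m).-homog by rewrite dhomogM ?Bpoly_homog ?Fpoly_homog.
rewrite /seed Nterms_addE ?Nterms_subF_Bpoly //; last first.
  move=> u uFB; apply/negP => uBF.
  by have := dhomog_mf homFB uFB; have := dhomog_mf homBF uBF; rewrite /=; lia.
have XE : 'X_0 ^+ (m - r) = 'X_[mon (m - r) 0] :> {mpoly R[2]}.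
  by rewrite mpolyX_mon expr0 mulr1.
by rewrite /Bpoly -mulrA -exprD XE mulrC Nterms_mulX Nterms_binom.
Qed.

Lemma Nterms_grow G : Nterms (grow G) = (m + Nterms G)%N.
Proof.
have XmE : 'X_0 ^+ m = 'X_[mon m 0] :> {mpoly R[2]} by rewrite mpolyX_mon expr0 mulr1.
rewrite /grow Nterms_addE; last first.
  move=> u /msupp_subF_Xn lt_um; rewrite XmE mulrC (perm_mem (msuppMX _ _)).
  by apply/mapP => -[v _ eu]; move: lt_um; rewrite eu mnmDE monE0; lia.
by rewrite XmE mulrC Nterms_mulX -XmE -Bpoly0 Nterms_subF_Bpoly.
Qed.

End TermCounts.

Lemma ev2_homog (S : comNzRingType) d (p : {mpoly S[2]}) (c x y : S) :
  p \is d.-homog -> ev2 p (c * x) (c * y) = c ^+ d * ev2 p x y.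
Proof.
move=> hp; rewrite /ev2 !mevalE mulr_sumr; apply: eq_big_seq => u /(dhomog_mf hp) /= <-.
rewrite mulrCA mdegE -prodrXr -big_split; congr (_ * _); apply: eq_bigr => i _.
by rewrite !ffunE; case: ifP => _; rewrite exprMn.
Qed.

Definition scale_inv (S : comNzRingType) (c : S) (p : {mpoly S[2]}) :=
  forall x y : S, ev2 p (c * x) (c * y) = ev2 p x y.

Lemma scale_inv_homog (S : comNzRingType) (c : S) d (p : {mpoly S[2]}) :
  c ^+ d = 1 -> p \is d.-homog -> scale_inv c p.
Proof. by move=> c_d hp x y; rewrite (ev2_homog _ _ _ hp) c_d mul1r. Qed.

Lemma ev2_FAP (S : comNzRingType) (f a p : {mpoly S[2]}) (x y : S) :
  ev2 (f - a + a * p) x y = ev2 f x y - ev2 a x y + ev2 a x y * ev2 p x y.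
Proof. by rewrite /ev2 mevalD mevalB mevalM. Qed.

Lemma scale_inv_FAP (S : comNzRingType) (c : S) (f a p : {mpoly S[2]}) :
  scale_inv c f -> scale_inv c a -> scale_inv c p -> scale_inv c (f - a + a * p).
Proof. by move=> invf inva invp x y; rewrite !ev2_FAP invf inva invp. Qed.

Lemma map_mpoly_homog (R : rcfType) d (p : {mpoly R[2]}) :
  p \is d.-homog -> map_mpoly (real_complex R) p \is d.-homog.
Proof. by rewrite !dhomogE (perm_all _ (msupp_map_mpoly _ (fmorph_inj _))). Qed.

Lemma ev2_Fpoly (R : rcfType) m (x y : R) : ev2 (Fpoly R m) x y = (x + y) ^+ m.
Proof. by rewrite /ev2 rmorphXn /= mevalD !mevalXU !ffunE. Qed.

Section Admissibility.
Variables (R : rcfType) (m : nat) (eta : R[i]).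
Hypotheses (m_gt0 : (0 < m)%N) (eta_m : eta ^+ m = 1).
Local Notation F := (Fpoly R m).
Local Notation invariant p := (scale_inv eta (map_mpoly (real_complex R) p)).

Lemma invariant_homog (p : {mpoly R[2]}) : p \is m.-homog -> invariant p.
Proof. by move=> hp; apply: scale_inv_homog eta_m (map_mpoly_homog hp). Qed.

Lemma ev2_Bpoly00 r : (r < m)%N -> ev2 (Bpoly R m r) 0 0 = 0.
Proof.
move=> lt_rm; rewrite /ev2 mevalM rmorphXn /= mevalXU ffunE /= expr0n.
by rewrite subn_eq0 leqNgt lt_rm mul0r.
Qed.

(* Every polynomial below has the shape F - A + A P: the defining relation is the
   case P = F, and F - A + A P = 1 on the line x + y = 1 as soon as P is. *)
Lemma admissible_FAP (A P : {mpoly R[2]}) :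
  invariant A -> invariant P -> (forall x y : R, x + y = 1 -> ev2 P x y = 1) ->
  ev2 A 0 0 = 0 ->
  coefs_ge0 (F - A + A * P) ->
  (exists2 H, coefs_ge0 H & F - A + A * P = F - H + H * F) ->
  admissible m eta (F - A + A * P).
Proof.
move=> invA invP lineP A00 ge0 [H ge0H eH]; split.
- rewrite /= rmorphD rmorphB rmorphM.
  exact: scale_inv_FAP (invariant_homog (Fpoly_homog R m)) invA invP.
- by move=> x y xy1; rewrite ev2_FAP ev2_Fpoly lineP // xy1 expr1n mulr1 subrK.
- exact: ge0.
- by rewrite ev2_FAP ev2_Fpoly A00 addr0 expr0n eqn0Ngt m_gt0 subr0 mul0r addr0.
- by exists H.
Qed.

Lemma admissible_Fpoly : admissible m eta F.
Proof.
have := @admissible_FAP 0 F; rewrite subr0 mul0r addr0; apply.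
- by move=> x y; rewrite rmorph0 /ev2 !meval0.
- exact: invariant_homog (Fpoly_homog R m).
- by move=> x y xy1; rewrite ev2_Fpoly xy1 expr1n.
- by rewrite /ev2 meval0.
- exact: coefs_ge0F.
- exists 0; last by rewrite subr0 mul0r addr0.
  by move=> u; rewrite mcoeff0.
Qed.

Lemma admissible_seed r : (r < m)%N -> admissible m eta (seed R m r).
Proof.
move=> lt_rm; have le_rm := ltnW lt_rm.
apply: admissible_FAP.
- exact: invariant_homog (Bpoly_homog _ le_rm).
- exact: invariant_homog (Fpoly_homog R m).
- by move=> x y xy1; rewrite ev2_Fpoly xy1 expr1n.
- exact: ev2_Bpoly00.
- apply: coefs_ge0D (coefs_ge0_subF_Bpoly _ le_rm) _.
  exact: coefs_ge0M (coefs_ge0B _ le_rm) (coefs_ge0F R m).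
- by exists (Bpoly R m r); first exact: coefs_ge0B.
Qed.

Lemma admissible_grow G : admissible m eta G -> admissible m eta (grow m G).
Proof.
case=> invG lineG ge0G _ [H [eG ge0H]]; rewrite /grow -Bpoly0.
have ge0B := coefs_ge0B R (leq0n m).
apply: admissible_FAP.
- exact: invariant_homog (Bpoly_homog _ (leq0n m)).
- exact: invG.
- exact: lineG.
- exact: ev2_Bpoly00.
- exact: coefs_ge0D (coefs_ge0_subF_Bpoly R (leq0n m)) (coefs_ge0M ge0B ge0G).
- exists (Bpoly R m 0 + Bpoly R m 0 * H); last by rewrite eG; ring.
  exact: coefs_ge0D ge0B (coefs_ge0M ge0B ge0H).
Qed.

End Admissibility.

Lemma mcoeff0_mul_homog (R : nzRingType) n d (p q : {mpoly R[n]}) :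
  (0 < d)%N -> p \is d.-homog -> (q * p)@_0%MM = 0.
Proof.
move=> d_gt0 hp; apply/eqP; rewrite -[_ == 0]negbK -mcoeff_msupp; apply/negP.
case/msuppM_le/allpairsP => -[u v] [_ /= /(dhomog_mf hp) /= dv] /(congr1 mdeg).
by rewrite mdeg0 mdegD dv; lia.
Qed.

Section LowerBound.
Variables (R : rcfType) (m : nat).
Local Notation F := (Fpoly R m).
Local Notation P i := (mon (m - i) i).

Lemma sumset_uniq (T : seq 'X_{1..2}) (s : 'X_{1..2}) :
  uniq T -> (0 < mdeg s)%N -> {in T, forall t, (t <= s)%O} ->
  uniq ([seq (P m + t)%MM | t <- T] ++ [seq (P i + 0)%MM | i <- iota 0 m]
        ++ [seq (P i + s)%MM | i <- iota 0 m]).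
Proof.
move=> uniqT s_gt0 s_max.
have P0 i t : (P i + t)%MM ord0 = (m - i + t ord0)%N by rewrite mnmDE monE0.
have P1 i t : (P i + t)%MM ord_max = (i + t ord_max)%N by rewrite mnmDE monE1.
have mdegP i t : (i <= m)%N -> mdeg (P i + t)%MM = (m + mdeg t)%N.
  by move=> le_im; rewrite mdegD mdeg_mon subnK.
have uniqP t : uniq [seq (P i + t)%MM | i <- iota 0 m].
  rewrite map_inj_uniq ?iota_uniq // => i j.
  by move/(congr1 (fun u : 'X_{1..2} => u ord_max))/eqP; rewrite !P1 eqn_add2r => /eqP.
rewrite !cat_uniq !uniqP map_inj_uniq; last exact: addmI.
rewrite uniqT has_cat negb_or !andbT /= -andbA; apply/and3P; split.
- apply/hasPn => u /mapP [i i_m ->]; apply/mapP => -[t _].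
  move/(congr1 (fun u : 'X_{1..2} => u ord_max)); rewrite !P1 mnm0E.
  by move: i_m; rewrite mem_iota; lia.
- apply/hasPn => u /mapP [i i_m ->]; apply/mapP => -[t Tt e].
  have := s_max t Tt; rewrite leNgt => /negP; apply.
  have deg_st : mdeg s = mdeg t.
    by move: (congr1 mdeg e); rewrite !mdegP //; move: i_m; rewrite mem_iota; lia.
  apply/(ltmcP deg_st); exists ord0 => [j|]; first by rewrite ltn0.
  move: (congr1 (fun u : 'X_{1..2} => u ord0) e); rewrite !P0 subnn.
  by move: i_m; rewrite mem_iota; lia.
- apply/hasPn => u /mapP [i i_m ->]; apply/mapP => -[j j_m /(congr1 mdeg)].
  by rewrite !mdegP ?mdeg0; move: i_m j_m; rewrite !mem_iota; lia.
Qed.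

Lemma Nterms_mulF_ge (q : {mpoly R[2]}) :
  coefs_ge0 q -> 0%MM \in msupp q -> (exists2 s, s \in msupp q & s != 0%MM) ->
  (Nterms q + 2 * m <= Nterms (q * F))%N.
Proof.
move=> ge0q q0 [s' qs' s'0]; set s := mlead q.
have qs : s \in msupp q.
  by apply: mlead_supp; apply: contraTneq q0 => ->; rewrite msupp0.
have s_gt0 : (0 < mdeg s)%N.
  by rewrite (leq_trans _ (lemc_mdeg (msupp_le_mlead qs'))) // lt0n mdeg_eq0.
have P_in i (t : 'X_{1..2}) :
    (i <= m)%N -> t \in msupp q -> (P i + t)%MM \in msupp (q * F).
  move=> le_im qt.
  exact: msuppM_ge0 ge0q (coefs_ge0F R m) qt (mem_msupp_Fpoly R le_im).
have := @uniq_leq_size _ _ (msupp (q * F))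
  (sumset_uniq (msupp_uniq q) s_gt0 (fun t => @msupp_le_mlead _ _ q t)).
rewrite /Nterms !size_cat !size_map size_iota mul2n -addnn; apply.
move=> u; rewrite !mem_cat => /or3P [] /mapP [i i_in ->]; first exact: P_in.
- by apply: P_in => //; move: i_in; rewrite mem_iota; lia.
- by apply: P_in => //; move: i_in; rewrite mem_iota; lia.
Qed.

End LowerBound.

Lemma Nterms_FHF_ge (R : rcfType) m (G H : {mpoly R[2]}) : (0 < m)%N ->
  coefs_ge0 G -> coefs_ge0 H -> G = Fpoly R m - H + H * Fpoly R m -> H != 0 ->
  (2 * m + 1 <= Nterms G)%N.
Proof.
move=> m_gt0 ge0G ge0H eG H_neq0; set q := 1 + H.
have ge0q : coefs_ge0 q by apply: coefs_ge0D => // u; rewrite mcoeff1 ler0n.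
have GH : G + H = q * Fpoly R m by rewrite eG /q; ring.
have H0 : H@_0%MM = 0.
  have := mcoeff0_mul_homog q m_gt0 (Fpoly_homog R m); rewrite -GH mcoeffD.
  by have := ge0G 0%MM; have := ge0H 0%MM; lra.
have q0 : 0%MM \in msupp q.
  by rewrite mcoeff_msupp mcoeffD mcoeff1 eqxx H0 addr0 oner_neq0.
have [s Hs s0] : exists2 s, s \in msupp H & s != 0%MM.
  exists (mlead H); first exact: mlead_supp.
  by apply: contraTneq (mlead_supp H_neq0) => ->; rewrite mcoeff_msupp H0 eqxx.
have qs : s \in msupp q.
  by rewrite mcoeff_msupp mcoeffD mcoeff1 (negbTE s0) mulr0n add0r -mcoeff_msupp.
have Nq : Nterms q = (Nterms H).+1.
  rewrite /q -mpolyX0 Nterms_addE /Nterms ?msuppX // => u.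
  by rewrite inE => /eqP ->; rewrite mcoeff_msupp H0 eqxx.
have := Nterms_mulF_ge m ge0q q0 (ex_intro2 _ _ s qs s0); rewrite -GH Nq.
by have := Nterms_addr_le G H; lia.
Qed.

Theorem mainTheorem8 (R : rcfType) (m : nat) (eta : R[i]) :
  (2 <= m)%N -> m.-primitive_root eta ->
  [/\ (forall G : {mpoly R[2]}, admissible m eta G ->
         Nterms G = m.+1 \/ (2 * m + 1 <= Nterms G)%N),
      (exists G : {mpoly R[2]}, admissible m eta G /\ Nterms G = m.+1) &
      (forall N : nat, (2 * m + 1 <= N)%N ->
         exists G : {mpoly R[2]}, admissible m eta G /\ Nterms G = N)].
Proof.
move=> m_ge2 eta_prim; have m_gt0 : (0 < m)%N by lia.
have eta_m := prim_expr_order eta_prim.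
split.
- move=> G [_ _ ge0G _ [H [eG ge0H]]].
  have [H0|H_neq0] := eqVneq H 0.
    by left; rewrite eG H0 subr0 mul0r addr0 Nterms_binom.
  by right; apply: Nterms_FHF_ge m_gt0 ge0G ge0H eG H_neq0.
- by exists (Fpoly R m); split; [exact: admissible_Fpoly | exact: Nterms_binom].
- move=> N le_N; set k := (N - (2 * m + 1))%N; set r := (k %% m)%N.
  have lt_r : (r < m)%N by rewrite ltn_pmod.
  exists (iter (k %/ m)%N (grow m) (seed R m r)).
  split.
    by elim: (k %/ m)%N => [|e IH] /=; [exact: admissible_seed | exact: admissible_grow].
  have Nterms_iter e G : Nterms (iter e (grow m) G) = (e * m + Nterms G)%N.
    by elim: e => //= e IH; rewrite Nterms_grow // IH; lia.
  by rewrite Nterms_iter Nterms_seed //; have := divn_eq k m; lia.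
Qed.
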